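(* Let $\mathcal X,\mathcal U$ be finite nonempty sets, $f:\mathcal X\times\mathcal U\to\mathcal X$ and $g:\mathcal X\to\mathbb R$. Then for all $x\in\mathcal X$, $$\max_{\pi\in\Pi}\min_{\tau\in\mathbb N} g(\xi_x^\pi(\tau))=\max_{\mathbf u\in\mathbb U}\min_{\tau\in\mathbb N} g(\xi_x^{\mathbf u}(\tau)).$$
   Context: $\mathbb N=\{0,1,\dots\}$; $\Pi$ is the set of maps $\mathcal X\to\mathcal U$; $\mathbb U$ is the set of sequences $\mathbb N\to\mathcal U$. For $\pi\in\Pi$: $\xi_x^\pi(0)=x$, $\xi_x^\pi(t+1)=f(\xi_x^\pi(t),\pi(\xi_x^\pi(t)))$. For $\mathbf u\in\mathbb U$: $\xi_x^{\mathbf u}(0)=x$, $\xi_x^{\mathbf u}(t+1)=f(\xi_x^{\mathbf u}(t),\mathbf u(t))$. *)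

From mathcomp Require Import all_boot all_order all_algebra.
From mathcomp Require Import reals.
Set Implicit Arguments. Unset Strict Implicit. Unset Printing Implicit Defensive.
Import Order.TTheory GRing.Theory Num.Theory.
Local Open Scope ring_scope.

Fixpoint xi_pol (X U : Type) (f : X -> U -> X) (pi : X -> U) (x : X) (t : nat) : X :=
  match t with
  | 0 => x
  | t'.+1 => let y := xi_pol f pi x t' in f y (pi y)
  end.

Fixpoint xi_seq (X U : Type) (f : X -> U -> X) (u : nat -> U) (x : X) (t : nat) : X :=
  match t with
  | 0 => x
  | t'.+1 => f (xi_seq f u x t') (u t')
  end.

Definition is_min_nat (R : realType) (h : nat -> R) (m : R) : Prop :=
  (exists t, h t = m) /\ (forall t, m <= h t).

Definition is_max_of_mins (R : realType) (A : Type) (h : A -> nat -> R) (v : R) : Prop :=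
  (forall a, exists m, is_min_nat (h a) m) /\
  (exists a, is_min_nat (h a) v) /\
  (forall a m, is_min_nat (h a) m -> m <= v).

(** A stationary policy does at least as well as any input sequence because
    the best value [v] of the open-loop problem (a maximum over the finitely
    many values of [g]) defines a viability kernel: the states from which
    some input sequence keeps [g >= v] forever.  Every state of the kernel
    has an input leading back into it, so choosing one such input per state
    is a policy whose trajectory from [x] never leaves the kernel.
    Conversely, a closed-loop trajectory is the open-loop trajectory of the
    inputs it uses, so no policy beats [v]. *)

From mathcomp Require Import all_boot all_order all_algebra.
From mathcomp Require Import boolp reals.
Local Open Scope ring_scope.
Import Order.TTheory GRing.Theory Num.Theory.

Lemma exists_argmax_fin {d : Order.disp_t} {T : orderType d} {X : finType}
    (g : X -> T) (P : X -> Prop) {y0 : X} :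
  P y0 -> exists y, P y /\ forall z, P z -> (g z <= g y)%O.
Proof.
move=> /asboolP Py0.
case: (@arg_maxP _ _ _ y0 (fun z => `[< P z >]) g Py0) => y /asboolP Py ymax.
by exists y; split=> // z /asboolP; apply: ymax.
Qed.

Lemma exists_argmin_fin {d : Order.disp_t} {T : orderType d} {X : finType}
    (g : X -> T) (P : X -> Prop) {y0 : X} :
  P y0 -> exists y, P y /\ forall z, P z -> (g y <= g z)%O.
Proof.
move=> /asboolP Py0.
case: (@arg_minP _ _ _ y0 (fun z => `[< P z >]) g Py0) => y /asboolP Py ymin.
by exists y; split=> // z /asboolP; apply: ymin.
Qed.

Lemma exists_is_min_nat_fin {R : realType} {X : finType} (g : X -> R)
    (h : nat -> X) :
  exists m, is_min_nat (fun t => g (h t)) m.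
Proof.
have [y [[t <-] ymin]] :=
  exists_argmin_fin g (fun y => exists t, h t = y) (ex_intro _ 0%N erefl).
by exists (g (h t)); split; [exists t | move=> s; apply: ymin; exists s].
Qed.

(* The attainable minima are values of [g], of which there are finitely many. *)
Lemma exists_max_of_mins_fin {R : realType} {A : Type} {X : finType}
    (g : X -> R) (h : A -> nat -> X) (a0 : A) :
  exists v, is_max_of_mins (fun a t => g (h a t)) v.
Proof.
pose attained y := exists a, is_min_nat (fun t => g (h a t)) (g y).
have [m0 [[t0 <-] min0]] := exists_is_min_nat_fin g (h a0).
have attained0 : attained (h a0 t0) by exists a0; split; first exists t0.
have [y [[a ya] ymax]] := exists_argmax_fin g attained attained0.
exists (g y); split; [|split].
- by move=> b; apply: exists_is_min_nat_fin.
- by exists a.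
- move=> b m [[t <-] bmin]; apply: ymax.
  by exists b; split; [exists t | ].
Qed.

Section Trajectories.

Context {X U : Type} (f : X -> U -> X).

Lemma xi_pol_seq (pi : X -> U) (x : X) :
  xi_pol f pi x = xi_seq f (fun s => pi (xi_pol f pi x s)) x.
Proof. by apply: funext; elim=> //= t ->. Qed.

Lemma xi_seqS (u : nat -> U) (y : X) (t : nat) :
  xi_seq f u y t.+1 = xi_seq f (fun s => u s.+1) (f y (u 0%N)) t.
Proof. by elim: t => //= t ->. Qed.

Definition viable (S : X -> Prop) (y : X) : Prop :=
  exists u : nat -> U, forall t, S (xi_seq f u y t).

Lemma viable_step (S : X -> Prop) (y : X) :
  viable S y -> exists a, viable S (f y a).
Proof.
by move=> [u Su]; exists (u 0%N), (fun s => u s.+1) => t; rewrite -xi_seqS.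
Qed.

Lemma exists_viable_policy (S : X -> Prop) (a0 : U) :
  exists pi : X -> U, forall y, viable S y -> forall t, S (xi_pol f pi y t).
Proof.
have step y : exists a, viable S y -> viable S (f y a).
  have [/viable_step [a Va] | notVy] := pselect (viable S y).
    by exists a.
  by exists a0 => /notVy.
have [pi piP] := choice step.
exists pi => y Vy t; have [u /(_ 0%N)//] : viable S (xi_pol f pi y t).
by elim: t => //= t; apply: piP.
Qed.

End Trajectories.

Theorem mainTheorem4 (R : realType) (X U : finType)
  (HX : (0 < #|X|)%N) (HU : (0 < #|U|)%N)
  (f : X -> U -> X) (g : X -> R) (x : X) :
  exists v : R,
    is_max_of_mins (fun (pi : X -> U) (t : nat) => g (xi_pol f pi x t)) v /\
    is_max_of_mins (fun (u : nat -> U) (t : nat) => g (xi_seq f u x t)) v.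
Proof.
have [a0 _] := card_gt0P HU.
have [v open_loop] :=
  exists_max_of_mins_fin g (fun u t => xi_seq f u x t) (fun _ => a0).
have [_ [[u [_ uv]] vmax]] := open_loop.
have policy_le pi m : is_min_nat (fun t => g (xi_pol f pi x t)) m -> m <= v.
  by rewrite xi_pol_seq; apply: vmax.
have [pi piP] := exists_viable_policy f (fun y => v <= g y) a0.
exists v; split=> //; split; [|split].
- by move=> pi'; apply: exists_is_min_nat_fin.
- exists pi; have [m pim] := exists_is_min_nat_fin g (xi_pol f pi x).
  have [[t tm] _] := pim.
  suff <- : m = v by [].
  apply/le_anti/andP; split; first exact: policy_le pim.
  by rewrite -tm; apply: piP; exists u.
- exact: policy_le.
Qed.
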